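(* Let $\bm{H}$ be a random matrix with values in $\mathbb{C}^{N_R\times N_T}$ (flat-fading MIMO channel), let $\lambda_{\max}$ be the maximum eigenvalue of $\bm{H}\bm{H}^\ast$, and let $W>0$, $\rho>0$ be constants. Consider the capacity with full channel side information $$c=W\max_{\bm{R}\succeq 0,\ \operatorname{Tr}[\bm{R}]=N_T}\log_2\det\Big(\bm{I}_{N_R}+\frac{\rho}{N_T}\bm{H}\bm{R}\bm{H}^\ast\Big),$$ where the maximum is over Hermitian positive semidefinite $\bm{R}\in\mathbb{C}^{N_T\times N_T}$, and the capacity with channel side information only at the receiver $$c=W\log_2\det\Big(\bm{I}_{N_R}+\frac{\rho}{N_T}\bm{H}\bm{H}^\ast\Big).$$ If $\mathbb{E}[(1+\lambda_{\max})^\theta]<\infty$ for some $\theta>0$, then the distribution of the capacity (in either case) is light-tailed.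
   Context: A nonnegative random variable $X$ is light-tailed if $\Pr(X>x)=O(e^{-\theta x})$ for some $\theta>0$, equivalently $\mathbb{E}[e^{\theta X}]<\infty$ for some $\theta>0$. Here $W$ is the bandwidth and $\rho=P/(N_0W)$ with $P$ the total average transmit power and $N_0$ the noise power spectral density. *)

From HB Require Import structures.
From mathcomp Require Import all_boot all_order all_algebra.
From mathcomp Require Import all_classical all_reals all_analysis.
From mathcomp Require Import complex.
Set Implicit Arguments. Unset Strict Implicit. Unset Printing Implicit Defensive.
Import Order.TTheory GRing.Theory Num.Theory.
Local Open Scope classical_set_scope.
Local Open Scope ring_scope.

Section Defs.
Variable R : realType.
Local Notation C := (complex R).

Definition ctrmx m n (A : 'M[C]_(m, n)) : 'M[C]_(n, m) := map_mx (@conjc R) A^T.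

Definition psd n (A : 'M[C]_n) : Prop :=
  ctrmx A = A /\ forall v : 'cV[C]_n, 0 <= (ctrmx v *m A *m v) 0 0.

Definition lambda_max n (A : 'M[C]_n) : R :=
  sup [set r : R | eigenvalue A (r%:C)%C].

Definition log2 (x : R) : R := ln x / ln 2.

Definition rate NR NT (W rho : R) (H : 'M[C]_(NR, NT)) (Q : 'M[C]_NT) : R :=
  W * log2 (complex.Re (\det (1%:M + ((rho / NT%:R)%:C)%C *: (H *m Q *m ctrmx H)))).

Definition cap_full NR NT (W rho : R) (H : 'M[C]_(NR, NT)) : R :=
  sup [set rate W rho H Q | Q in [set Q : 'M[C]_NT | psd Q /\ \tr Q = NT%:R]].

Definition cap_rx NR NT (W rho : R) (H : 'M[C]_(NR, NT)) : R :=
  W * log2 (complex.Re (\det (1%:M + ((rho / NT%:R)%:C)%C *: (H *m ctrmx H)))).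

Definition light_tailed d (T : measurableType d) (P : probability T R)
    (X : T -> R) : Prop :=
  measurable_fun setT X /\
  exists theta : R, 0 < theta /\ exists M : R, exists x0 : R,
    forall x : R, x0 <= x -> (P [set w | (x < X w)%R] <= (M * expR (- (theta * x)))%:E)%E.
End Defs.

(* Both capacities are rates W log2 det(I + M) with M = (rho/N_T) H Q H^* positive
   semidefinite and tr M <= rho N_R lambda_max, so det(I + M) <= (1 + tr M)^N_R bounds them by
   a + b ln(1 + lambda_max) with constants a, b >= 0; a Chernoff bound with the moment
   E[(1 + lambda_max)^theta] then gives the exponential tail.  The delicate point is that the
   full-CSI capacity, a supremum over uncountably many Q, is measurable: by continuity of
   Q |-> rate it equals the supremum over the countable family of trace-normalised Gram
   matrices of Gaussian-rational matrices. *)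

From mathcomp Require Import all_boot all_order all_algebra.
From mathcomp Require Import all_classical all_reals all_analysis.
From mathcomp Require Import complex.
From mathcomp Require Import lra measurable_realfun.
Set Implicit Arguments. Unset Strict Implicit. Unset Printing Implicit Defensive.
Import Order.TTheory GRing.Theory Num.Theory.
Import numFieldNormedType.Exports.
Local Open Scope classical_set_scope.
Local Open Scope ring_scope.
Local Open Scope sesquilinear_scope.

Section PsdMatrices.
Variable C : numClosedFieldType.

Definition psdmx n (A : 'M[C]_n) :=
  A \is hermsymmx /\ forall u : 'rV_n, 0 <= (u *m A *m u^t*) 0 0.

Lemma ctrmx_mul m n p (A : 'M[C]_(m, n)) (B : 'M[C]_(n, p)) :
  (A *m B)^t* = B^t* *m A^t*.
Proof. by rewrite trmx_mul map_mxM. Qed.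

Lemma ctrmx_scale m n (c : C) (A : 'M[C]_(m, n)) : (c *: A)^t* = c^* *: A^t*.
Proof. by apply/matrixP => i j; rewrite !mxE rmorphM. Qed.

Lemma hermsymmxE n (A : 'M[C]_n) : (A \is hermsymmx) = (A^t* == A).
Proof. by rewrite is_hermitianmxE expr0 scale1r eq_sym. Qed.

Lemma mulmx_row_ctr n (P A : 'M[C]_n) j :
  (row j P *m A *m (row j P)^t*) 0 0 = (P *m A *m P^t*) j j.
Proof. by rewrite -row_mul !mxE; apply: eq_bigr => k _; rewrite !mxE. Qed.

Lemma mulmx_ctr_unitary n (P : 'M[C]_n) : P \is unitarymx -> P^t* *m P = 1%:M.
Proof. by rewrite -trmxC_unitary => /unitarymxP; rewrite trmxCK. Qed.

Lemma mulmx_unitary_ctr n (P : 'M[C]_n) : P \is unitarymx -> P *m P^t* = 1%:M.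
Proof. by move/unitarymxP. Qed.

Lemma psdmx_gram m n (X : 'M[C]_(m, n)) : psdmx (X *m X^t*).
Proof.
split; first by rewrite hermsymmxE ctrmx_mul trmxCK.
move=> u; rewrite mulmxA -mulmxA -ctrmx_mul mxE; apply: sumr_ge0 => k _.
by rewrite !mxE mul_conjC_ge0.
Qed.

Lemma psdmx1 n : psdmx (1%:M : 'M[C]_n).
Proof.
have -> : (1%:M : 'M[C]_n) = 1%:M *m 1%:M^t* by rewrite trmx1 map_mx1 mulmx1.
exact: psdmx_gram.
Qed.

Lemma psdmx_scale n (c : C) (A : 'M[C]_n) : 0 <= c -> psdmx A -> psdmx (c *: A).
Proof.
move=> c0 [hA pA]; split.
  by move: hA; rewrite !hermsymmxE ctrmx_scale geC0_conj // => /eqP ->.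
by move=> u; rewrite -scalemxAr -scalemxAl mxE mulr_ge0.
Qed.

Lemma psdmx_spectral n (A : 'M[C]_n) : psdmx A ->
  exists P : 'M[C]_n, exists d : 'rV[C]_n,
    [/\ P \is unitarymx, forall j, 0 <= d 0 j & A = P^t* *m diag_mx d *m P].
Proof.
move=> [hA pA]; have /orthomx_spectralP eA := hermitian_normalmx hA.
set P := spectralmx A in eA; set d := spectral_diag A in eA.
have Pu : P \is unitarymx by exact: spectral_unitarymx.
rewrite invmx_unitary // in eA.
exists P, d; split => // j.
have := pA (row j P); rewrite mulmx_row_ctr eA.
rewrite -!mulmxA mulmx_unitary_ctr // mulmx1 !mulmxA mulmx_unitary_ctr // mul1mx.
by rewrite mxE eqxx mulr1n.
Qed.

Lemma psdmx_factor n (A : 'M[C]_n) : psdmx A -> exists B : 'M[C]_n, A = B *m B^t*.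
Proof.
move=> /psdmx_spectral [P [d [Pu d0 ->]]].
pose s := \row_j sqrtC (d 0 j).
have es : (diag_mx s)^t* = diag_mx s.
  apply/matrixP => i j; rewrite !mxE eq_sym.
  by case: eqP => [->|_]; rewrite ?mulr1n ?mulr0n ?conjC0 // geC0_conj // sqrtC_ge0.
exists (P^t* *m diag_mx s).
rewrite ctrmx_mul trmxCK es -!mulmxA; congr (_ *m _); rewrite !mulmxA; congr (_ *m _).
by rewrite mulmx_diag; congr diag_mx; apply/rowP => j; rewrite !mxE -expr2 sqrtCK.
Qed.

Section UnitarilyDiagonal.
Variables (n : nat) (P : 'M[C]_n) (d : 'rV[C]_n).
Hypothesis Pu : P \is unitarymx.
Let A := P^t* *m diag_mx d *m P.

Lemma det1D_unitary_diag : \det (1%:M + A) = \prod_j (1 + d 0 j).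
Proof.
have -> : 1%:M + A = P^t* *m diag_mx (\row_j (1 + d 0 j)) *m P.
  rewrite (_ : diag_mx _ = 1%:M + diag_mx d); last first.
    by apply/matrixP => i k; rewrite !mxE; case: eqP; rewrite ?mulr1n ?mulr0n ?addr0.
  by rewrite mulmxDr mulmxDl mulmx1 mulmx_ctr_unitary.
rewrite !det_mulmx det_diag mulrC mulrA -det_mulmx mulmx_unitary_ctr // det1 mul1r.
by apply: eq_bigr => j _; rewrite mxE.
Qed.

Lemma mxtrace_unitary_diag : \tr A = \sum_j d 0 j.
Proof. by rewrite mxtrace_mulC mulmxA mulmx_unitary_ctr // mul1mx mxtrace_diag. Qed.

Lemma mxtrace_mul_unitary_diag_le (G : 'M[C]_n) : (forall j, 0 <= d 0 j) -> psdmx G ->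
  \tr (A *m G) <= \tr A * \tr G.
Proof.
move=> d0 [_ pG]; have PGP_ge0 j : 0 <= (P *m G *m P^t*) j j by rewrite -mulmx_row_ctr.
have -> : \tr (A *m G) = \sum_j d 0 j * (P *m G *m P^t*) j j.
  rewrite -!mulmxA mxtrace_mulC -!mulmxA mul_diag_mx /mxtrace.
  by apply: eq_bigr => j _; rewrite !mxE.
have -> : \tr G = \sum_j (P *m G *m P^t*) j j.
  by rewrite -[\sum_j _]/(\tr _) mxtrace_mulC mulmxA mulmx_ctr_unitary // mul1mx.
rewrite mxtrace_unitary_diag mulr_suml; apply: ler_sum => j _; apply: ler_wpM2l => //.
by rewrite (bigD1 j) //= lerDl sumr_ge0.
Qed.

Lemma eigenvalue_unitary_diag a : eigenvalue A a <-> exists j, a = d 0 j.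
Proof.
split=> [/eigenvalueP [v hv v0] | [j ->]].
  pose u := v *m P^t*.
  have hu : u *m diag_mx d = a *: u.
    have := congr1 (fun M : 'rV_n => M *m P^t*) hv.
    by rewrite -!mulmxA mulmx_unitary_ctr // mulmx1 !mulmxA -scalemxAl.
  have [j uj] : exists j, u 0 j != 0.
    apply/existsP; apply: contraNT v0; rewrite negb_exists => /forallP u0.
    have u_eq0 : u = 0.
      by apply/rowP => j; have := u0 j; rewrite [RHS]mxE negbK => /eqP.
    by rewrite -[v]mulmx1 -(mulmx_ctr_unitary Pu) mulmxA -/u u_eq0 mul0mx.
  exists j; have := congr1 (fun M : 'rV_n => M 0 j) hu.
  by rewrite mul_mx_diag mxE [(a *: u) 0 j]mxE [u 0 j * _]mulrC => /(mulIf uj) ->.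
apply/eigenvalueP; exists (row j P).
  rewrite rowE !mulmxA -[delta_mx 0 j *m P *m P^t*]mulmxA mulmx_unitary_ctr // mulmx1.
  rewrite mul_mx_diag scalemxAl; congr (_ *m _).
  apply/matrixP => i k; rewrite !mxE (ord1 i) eqxx /=.
  by case: (k =P j) => [->|_]; rewrite ?mulr1n ?mulr0n ?mul1r ?mul0r ?mulr1 ?mulr0.
apply/eqP => Pj0; have := congr1 (fun M : 'M[C]_n => M j j) (mulmx_unitary_ctr Pu).
rewrite /= -{1}(mulmx1 P) -mulmx_row_ctr Pj0 !mul0mx !mxE eqxx mulr1n.
by move=> /esym/eqP; rewrite oner_eq0.
Qed.
End UnitarilyDiagonal.

Lemma prod1D_bounds (I : finType) (F : I -> C) : (forall i, 0 <= F i) ->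
  1 <= \prod_i (1 + F i) <= (1 + \sum_i F i) ^+ #|I|.
Proof.
move=> F0; apply/andP; split.
  rewrite -[X in X <= _](@big1 C 1 *%R I (index_enum I) xpredT (fun=> 1)) //.
  by apply: ler_prod => i _; rewrite ler01 lerDl F0.
rewrite -prodr_const; apply: ler_prod => i _.
by rewrite addr_ge0 ?ler01 //= lerD2l (bigD1 i) //= lerDl sumr_ge0.
Qed.

Lemma det1D_psd_bounds n (A : 'M[C]_n) : psdmx A ->
  1 <= \det (1%:M + A) <= (1 + \tr A) ^+ n.
Proof.
move=> /psdmx_spectral [P [d [Pu d0 ->]]].
rewrite det1D_unitary_diag // mxtrace_unitary_diag // -[n in _ ^+ n]card_ord.
exact: prod1D_bounds.
Qed.

Lemma psdmx_mxtrace_ge0 n (A : 'M[C]_n) : psdmx A -> 0 <= \tr A.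
Proof.
by move=> /psdmx_spectral [P [d [Pu d0 ->]]]; rewrite mxtrace_unitary_diag // sumr_ge0.
Qed.

Lemma mxtrace_mul_psd_le n (A G : 'M[C]_n) : psdmx A -> psdmx G ->
  \tr (A *m G) <= \tr A * \tr G.
Proof.
by move=> /psdmx_spectral [P [d [Pu d0 ->]]]; apply: mxtrace_mul_unitary_diag_le.
Qed.

Lemma psdmx_eigenvalues n (A : 'M[C]_n) : psdmx A ->
  exists d : 'I_n -> C, [/\ forall j, 0 <= d j, \tr A = \sum_j d j &
    forall a, eigenvalue A a <-> exists j, a = d j].
Proof.
move=> /psdmx_spectral [P [d [Pu d0 ->]]]; exists (d 0); split => //.
  exact: mxtrace_unitary_diag.
exact: eigenvalue_unitary_diag.
Qed.
End PsdMatrices.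

Section ComplexMatrices.
Variable R : realType.
Local Notation C := R[i].
Local Notation Re := (@complex.Re R).

Lemma ctrmxE m n (A : 'M[C]_(m, n)) : ctrmx A = A^t*.
Proof. by []. Qed.

Lemma psdE n (Q : 'M[C]_n) : psd Q <-> psdmx Q.
Proof.
rewrite /psd /psdmx hermsymmxE ctrmxE; split=> [[-> pQ] | [/eqP -> pQ]].
  by split=> // u; have := pQ (u^t*); rewrite ctrmxE trmxCK.
by split=> // v; have := pQ (v^t*); rewrite trmxCK.
Qed.

Lemma Re_ler (x y : C) : x <= y -> Re x <= Re y.
Proof. by rewrite lecE => /andP[]. Qed.

Lemma Re_ler_real (x : C) (r : R) : x <= r%:C%C -> Re x <= r.
Proof. exact: Re_ler. Qed.

Lemma ReK_ge0 (x : C) : 0 <= x -> (Re x)%:C%C = x.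
Proof. by move=> /ger0_real/RRe_real. Qed.

Lemma lambda_max_psd n (A : 'M[C]_n) : psdmx A ->
  0 <= lambda_max A /\ Re (\tr A) <= n%:R * lambda_max A.
Proof.
move=> /psdmx_eigenvalues [d [d0 -> eigA]]; rewrite /lambda_max.
have -> : [set r : R | eigenvalue A r%:C%C] = range (fun j => Re (d j)).
  apply/seteqP; split=> r /=.
    by move=> /eigA [j rj]; exists j => //; rewrite -rj.
  by move=> [j _ <-]; apply/eigA; exists j; rewrite ReK_ge0.
have Re_d_ge0 j : 0 <= Re (d j) by rewrite -lecR ReK_ge0.
have ub : has_ubound (range (fun j => Re (d j))).
  by exists (\sum_j Re (d j)) => _ [j _ <-]; rewrite (bigD1 j) //= lerDl sumr_ge0.
split.
  have [->|/set0P [_ [j _ _]]] := eqVneq (range (fun j => Re (d j))) set0.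
    by rewrite sup0.
  by apply: le_trans (Re_d_ge0 j) (ub_le_sup ub _); exists j.
rewrite raddf_sum mulr_natl -[n in _ *+ n]card_ord -sumr_const.
by apply: ler_sum => j _; apply: ub_le_sup => //; exists j.
Qed.
End ComplexMatrices.

Definition capacity_bound (R : realType) (NR : nat) (W rho lam : R) : R :=
  W * NR%:R / ln 2 * (ln (1 + rho * NR%:R) + ln (1 + lam)).

Section CapacityBound.
Variable R : realType.
Local Notation C := R[i].
Local Notation Re := (@complex.Re R).
Variables (NR NT : nat) (W rho : R) (H : 'M[C]_(NR, NT)).
Hypotheses (W_gt0 : 0 < W) (rho_gt0 : 0 < rho).
Let lam := lambda_max (H *m ctrmx H).

Lemma lambda_max_gram_ge0 : 0 <= lam.
Proof. by have [] := lambda_max_psd (psdmx_gram H). Qed.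

Lemma mxtrace_rate_le (Q : 'M[C]_NT) : psdmx Q -> \tr Q = NT%:R ->
  \tr ((rho / NT%:R)%:C%C *: (H *m Q *m ctrmx H)) <= (rho * NR%:R * lam)%:C%C.
Proof.
move=> psdQ trQ; have [_ trHH] := lambda_max_psd (psdmx_gram H).
have trHH_real := ReK_ge0 (psdmx_mxtrace_ge0 (psdmx_gram H)).
have trHQH : \tr (H *m Q *m ctrmx H) <= NT%:R * (NR%:R * lam)%:C%C.
  rewrite -mulmxA mxtrace_mulC -mulmxA -trQ.
  apply: le_trans (mxtrace_mul_psd_le psdQ _) _.
    by have := psdmx_gram (H^t*); rewrite trmxCK.
  rewrite mxtrace_mulC ctrmxE -trHH_real; apply: ler_wpM2l; first by rewrite trQ ler0n.
  by rewrite lecR.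
have rhoNT : rho / NT%:R * NT%:R <= rho.
  have [->|NT0] := eqVneq NT 0%N; first by rewrite mulr0 ltW.
  by rewrite divfK // pnatr_eq0.
rewrite mxtraceZ; apply: le_trans (ler_wpM2l _ trHQH) _.
  by rewrite lecR divr_ge0 // ltW.
rewrite mulrA -(rmorph_nat (real_complex R)) -!rmorphM lecR -[rho * _ * _]mulrA.
by apply: ler_wpM2r rhoNT; rewrite mulr_ge0 ?ler0n ?lambda_max_gram_ge0.
Qed.

Lemma det_rate_bounds (Q : 'M[C]_NT) : psdmx Q -> \tr Q = NT%:R ->
  1 <= Re (\det (1%:M + (rho / NT%:R)%:C%C *: (H *m Q *m ctrmx H)))
    <= ((1 + rho * NR%:R) * (1 + lam)) ^+ NR.
Proof.
move=> psdQ trQ; have trM := mxtrace_rate_le psdQ trQ.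
set M := _ *: _ in trM *; have psdM : psdmx M.
  apply: psdmx_scale; first by rewrite lecR divr_ge0 // ltW.
  have [B ->] := psdmx_factor psdQ.
  by rewrite ctrmxE !mulmxA -mulmxA -ctrmx_mul; exact: psdmx_gram.
have /andP[det_ge1 det_le] := det1D_psd_bounds psdM.
have lam0 := lambda_max_gram_ge0.
have rhoNR0 : 0 <= rho * NR%:R by rewrite mulr_ge0 ?ler0n ?ltW.
apply/andP; split; first exact: (Re_ler det_ge1).
have det_le_real : \det (1%:M + M) <= ((1 + rho * NR%:R * lam) ^+ NR)%:C%C.
  have trM0 := le_trans (psdmx_mxtrace_ge0 psdM) trM.
  apply: le_trans det_le _; rewrite rmorphXn rmorphD rmorph1 lerXn2r ?nnegrE ?lerD2l //.
    by rewrite addr_ge0 //; exact: psdmx_mxtrace_ge0.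
  by rewrite addr_ge0.
apply: le_trans (Re_ler_real det_le_real) _.
have base_le : 1 + rho * NR%:R * lam <= (1 + rho * NR%:R) * (1 + lam).
  by move: lam0 rhoNR0; generalize lam (rho * NR%:R) => l a l0 a0; nra.
have base_ge0 : 0 <= 1 + rho * NR%:R * lam by rewrite addr_ge0 // mulr_ge0.
by rewrite lerXn2r ?nnegrE // (le_trans base_ge0 base_le).
Qed.

Lemma rate_le_capacity_bound (Q : 'M[C]_NT) : psdmx Q -> \tr Q = NT%:R ->
  rate W rho H Q <= capacity_bound NR W rho lam.
Proof.
move=> psdQ trQ; have /andP[det_ge1 det_le] := det_rate_bounds psdQ trQ.
have rhoNR1_gt0 : 0 < 1 + rho * NR%:R by rewrite ltr_pwDl // mulr_ge0 ?ler0n ?ltW.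
have lam1_gt0 : 0 < 1 + lam by rewrite ltr_pwDl // lambda_max_gram_ge0.
rewrite /rate /log2 /capacity_bound -!mulrA; apply: ler_wpM2l; first exact: ltW.
rewrite mulrCA mulrC; apply: ler_wpM2l; first by rewrite invr_ge0 ltW // ln_gt0 // ltr1n.
rewrite -lnM ?posrE // mulr_natl -lnXn ?mulr_gt0 // ler_ln ?posrE ?exprn_gt0 ?mulr_gt0 //.
exact: lt_le_trans ltr01 det_ge1.
Qed.
End CapacityBound.

Definition fun_ring_closed (R : realType) (X : Type) (S : (X -> R) -> Prop) :=
  [/\ forall c, S (fun=> c),
      forall f g, S f -> S g -> S (fun x => f x + g x),
      forall f, S f -> S (fun x => - f x) &
      forall f g, S f -> S g -> S (fun x => f x * g x)].

Section FunctionSubring.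
Variables (R : realType) (X : Type) (S : (X -> R) -> Prop).
Hypothesis S_ring : fun_ring_closed S.
Local Notation C := R[i].
Local Notation Re := (@complex.Re R).
Local Notation Im := (@complex.Im R).

Let S_cst c : S (fun=> c). Proof. by case: S_ring => h _ _ _; exact: h. Qed.
Let S_add f g : S f -> S g -> S (fun x => f x + g x).
Proof. by case: S_ring => _ h _ _; exact: h. Qed.
Let S_opp f : S f -> S (fun x => - f x). Proof. by case: S_ring => _ _ h _; exact: h. Qed.
Let S_mul f g : S f -> S g -> S (fun x => f x * g x).
Proof. by case: S_ring => _ _ _ h; exact: h. Qed.

Definition complexS (f : X -> C) :=
  S (fun x => Re (f x)) /\ S (fun x => Im (f x)).

Definition matrixS m n (A : X -> 'M[C]_(m, n)) := forall i j, complexS (fun x => A x i j).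

Lemma complexS_cst c : complexS (fun=> c).
Proof. by split. Qed.

Lemma complexS_add f g : complexS f -> complexS g -> complexS (fun x => f x + g x).
Proof.
move=> [f1 f2] [g1 g2]; split.
  have -> : (fun x => Re (f x + g x)) = (fun x => Re (f x) + Re (g x)).
    by apply/funext => x; case: (f x) => a b; case: (g x).
  exact: S_add.
have -> : (fun x => Im (f x + g x)) = (fun x => Im (f x) + Im (g x)).
  by apply/funext => x; case: (f x) => a b; case: (g x).
exact: S_add.
Qed.

Lemma complexS_mul f g : complexS f -> complexS g -> complexS (fun x => f x * g x).
Proof.
move=> [f1 f2] [g1 g2]; split.
  have -> : (fun x => Re (f x * g x)) =
      (fun x => Re (f x) * Re (g x) + - (Im (f x) * Im (g x))).
    by apply/funext => x; case: (f x) => a b; case: (g x).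
  by apply: S_add; [exact: S_mul | apply: S_opp; exact: S_mul].
have -> : (fun x => Im (f x * g x)) =
    (fun x => Re (f x) * Im (g x) + Im (f x) * Re (g x)).
  by apply/funext => x; case: (f x) => a b; case: (g x).
by apply: S_add; exact: S_mul.
Qed.

Lemma complexS_conj f : complexS f -> complexS (fun x => (f x)^*).
Proof.
move=> [f1 f2]; split.
  by have -> : (fun x => Re (f x)^*) = (fun x => Re (f x))
    by apply/funext => x; case: (f x).
have -> : (fun x => Im (f x)^*) = (fun x => - Im (f x)).
  by apply/funext => x; case: (f x).
exact: S_opp.
Qed.

Lemma complexS_sum (I : Type) (r : seq I) (P : pred I) (F : I -> X -> C) :
  (forall i, P i -> complexS (F i)) -> complexS (fun x => \sum_(i <- r | P i) F i x).
Proof.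
move=> SF; elim: r => [|i r IH]; first by under eq_fun do rewrite big_nil; exact: complexS_cst.
under eq_fun do rewrite big_cons.
by case: (boolP (P i)) => // Pi; apply: complexS_add => //; apply: SF.
Qed.

Lemma complexS_prod (I : Type) (r : seq I) (P : pred I) (F : I -> X -> C) :
  (forall i, P i -> complexS (F i)) -> complexS (fun x => \prod_(i <- r | P i) F i x).
Proof.
move=> SF; elim: r => [|i r IH]; first by under eq_fun do rewrite big_nil; exact: complexS_cst.
under eq_fun do rewrite big_cons.
by case: (boolP (P i)) => // Pi; apply: complexS_mul => //; apply: SF.
Qed.

Lemma matrixS_cst m n (A : 'M[C]_(m, n)) : matrixS (fun=> A).
Proof. by move=> i j; exact: complexS_cst. Qed.

Lemma matrixS_add m n (A B : X -> 'M[C]_(m, n)) :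
  matrixS A -> matrixS B -> matrixS (fun x => A x + B x).
Proof. by move=> SA SB i j; under eq_fun do rewrite mxE; exact: complexS_add. Qed.

Lemma matrixS_mul m n p (A : X -> 'M[C]_(m, n)) (B : X -> 'M[C]_(n, p)) :
  matrixS A -> matrixS B -> matrixS (fun x => A x *m B x).
Proof.
move=> SA SB i j; under eq_fun do rewrite mxE.
by apply: complexS_sum => k _; exact: complexS_mul.
Qed.

Lemma matrixS_scale m n (c : X -> C) (A : X -> 'M[C]_(m, n)) :
  complexS c -> matrixS A -> matrixS (fun x => c x *: A x).
Proof. by move=> Sc SA i j; under eq_fun do rewrite mxE; exact: complexS_mul. Qed.

Lemma matrixS_ctr m n (A : X -> 'M[C]_(m, n)) : matrixS A -> matrixS (fun x => (A x)^t*).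
Proof. by move=> SA i j; under eq_fun do rewrite !mxE; exact: complexS_conj. Qed.

Lemma complexS_det n (A : X -> 'M[C]_n) : matrixS A -> complexS (fun x => \det (A x)).
Proof.
move=> SA; rewrite /determinant; apply: complexS_sum => s _.
by apply: complexS_mul; [exact: complexS_cst | apply: complexS_prod => i _; exact: SA].
Qed.

Lemma complexS_tr n (A : X -> 'M[C]_n) : matrixS A -> complexS (fun x => \tr (A x)).
Proof. by move=> SA; apply: complexS_sum => i _; exact: SA. Qed.

Lemma S_Re_det_rate NR NT (rho : R) (H : X -> 'M[C]_(NR, NT)) (Q : X -> 'M[C]_NT) :
  matrixS H -> matrixS Q ->
  S (fun x => Re (\det (1%:M + (rho / NT%:R)%:C%C *: (H x *m Q x *m ctrmx (H x))))).
Proof.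
move=> SH SQ; apply: (complexS_det _).1; apply: matrixS_add; first exact: matrixS_cst.
apply: matrixS_scale; first exact: complexS_cst.
by apply: matrixS_mul; [exact: matrixS_mul | exact: matrixS_ctr].
Qed.
End FunctionSubring.

Section MeasurableRate.
Variables (R : realType) (d : measure_display) (T : measurableType d).

Lemma measurable_ring_closed : fun_ring_closed (@measurable_fun _ _ T R setT).
Proof.
split=> *; [exact: measurable_cst | exact: measurable_funD |
             exact: measurable_funN | exact: measurable_funM].
Qed.

Lemma measurable_rate NR NT (W rho : R) (H : T -> 'M[R[i]]_(NR, NT)) (Q : 'M[R[i]]_NT) :
  matrixS (measurable_fun setT) H -> measurable_fun setT (fun w => rate W rho (H w) Q).
Proof.
move=> mH; apply: measurable_funM; first exact: measurable_cst.
apply: measurable_funM; last exact: measurable_cst.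
apply: measurableT_comp; first exact: measurable_ln.
by have := S_Re_det_rate measurable_ring_closed rho mH (matrixS_cst measurable_ring_closed Q).
Qed.
End MeasurableRate.

Section ContinuousRate.
Variable R : realType.
Local Notation C := R[i].

(* A sequence together with its limit, packed as one function on [option nat] whose value at
   [None] is the limit, so that convergence reuses the closure lemmas proved for measurability. *)
Definition cvg_opt (u : option nat -> R) := (fun n => u (Some n)) @ \oo --> u None.

Lemma cvg_opt_ring_closed : fun_ring_closed cvg_opt.
Proof. by split=> *; [exact: cvg_cst | exact: cvgD | exact: cvgN | exact: cvgM]. Qed.

Lemma cvg_opt_rate NR NT (W rho : R) (H : 'M[C]_(NR, NT)) (Q : option nat -> 'M[C]_NT) :
  matrixS cvg_opt Q ->
  0 < complex.Re (\det (1%:M + (rho / NT%:R)%:C%C *: (H *m Q None *m ctrmx H))) ->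
  cvg_opt (fun x => rate W rho H (Q x)).
Proof.
move=> cvgQ det_gt0; have cvg_det := S_Re_det_rate cvg_opt_ring_closed rho
  (matrixS_cst cvg_opt_ring_closed H) cvgQ.
apply: cvgM; first exact: cvg_cst.
by apply: cvgM; [exact: continuous_cvg _ (continuous_ln det_gt0) cvg_det | exact: cvg_cst].
Qed.
End ContinuousRate.
Arguments cvg_opt {R} u.
Arguments cvg_opt_ring_closed {R}.

Section AdmissibleSequence.
Variable R : realType.
Local Notation C := R[i].
Local Notation Re := (@complex.Re R).

Definition rat_cmx n (M : 'M[rat * rat]_n) : 'M[C]_n :=
  \matrix_(i, j) ((ratr (M i j).1 : R) +i* (ratr (M i j).2 : R))%C.

Definition trace_normalize n (B : 'M[C]_n) : 'M[C]_n :=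
  let t := Re (\tr (B *m B^t*)) in
  if 0 < t then (n%:R / t)%:C%C *: (B *m B^t*) else 1%:M.

Definition admissible_seq n (k : nat) : 'M[C]_n :=
  if unpickle k is Some M then trace_normalize (rat_cmx M) else 1%:M.

Lemma admissible1 n : psd (1%:M : 'M[C]_n) /\ \tr (1%:M : 'M[C]_n) = n%:R.
Proof. by split; [apply/psdE; exact: psdmx1 | exact: mxtrace1]. Qed.

Lemma admissible_trace_normalize n (B : 'M[C]_n) :
  psd (trace_normalize B) /\ \tr (trace_normalize B) = n%:R.
Proof.
rewrite /trace_normalize; case: ifPn => [t_gt0|_]; last exact: admissible1.
split; first by apply/psdE/psdmx_scale; [rewrite lecR divr_ge0 // ltW | exact: psdmx_gram].
rewrite mxtraceZ -(ReK_ge0 (psdmx_mxtrace_ge0 (psdmx_gram B))) -rmorphM /=.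
by rewrite divfK ?gt_eqF // rmorph_nat.
Qed.

Lemma admissible_seqP n k :
  psd (admissible_seq n k) /\ \tr (admissible_seq n k) = n%:R.
Proof.
rewrite /admissible_seq; case: unpickle => [M|]; last exact: admissible1.
exact: admissible_trace_normalize.
Qed.

Lemma rat_approx (x : R) : exists q : nat -> rat, (fun k => ratr (q k) : R) @ \oo --> x.
Proof.
have near_rat k : exists q : rat, `|x - ratr q| < k.+1%:R^-1.
  set e : R := k.+1%:R^-1; have e_gt0 : 0 < e by rewrite invr_gt0 ltr0n.
  have xe : x - e < x + e by lra.
  have [q] := rat_in_itvoo xe.
  by rewrite in_itv /= => /andP[q_gt q_lt]; exists q; rewrite ltr_norml; apply/andP; split; lra.
have [q qx] := choice near_rat; exists q; apply/cvgrPdist_lt => e e_gt0.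
by apply: filterS (near_infty_natSinv_lt (PosNum e_gt0)) => k; apply: lt_trans (qx k).
Qed.

Lemma rat_cmx_approx n (B : 'M[C]_n) :
  exists M_ : nat -> 'M[rat * rat]_n, matrixS cvg_opt (oapp (fun k => rat_cmx (M_ k)) B).
Proof.
have entry_approx (ij : 'I_n * 'I_n) : exists q : (nat -> rat) * (nat -> rat),
    (fun k => ratr (q.1 k) : R) @ \oo --> Re (B ij.1 ij.2) /\
    (fun k => ratr (q.2 k) : R) @ \oo --> complex.Im (B ij.1 ij.2).
  have [q1 ?] := rat_approx (Re (B ij.1 ij.2)).
  have [q2 ?] := rat_approx (complex.Im (B ij.1 ij.2)).
  by exists (q1, q2).
have [q qB] := choice entry_approx.
exists (fun k => \matrix_(i, j) ((q (i, j)).1 k, (q (i, j)).2 k)) => i j.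
by split; rewrite /cvg_opt; under eq_fun do rewrite /= !mxE /=;
  [exact: (qB (i, j)).1 | exact: (qB (i, j)).2].
Qed.
End AdmissibleSequence.
Arguments rat_cmx {R n} M.
Arguments trace_normalize {R n} B.
Arguments admissible_seq {R} n k.

Lemma cap_rxE (R : realType) NR NT (W rho : R) (H : 'M[R[i]]_(NR, NT)) :
  cap_rx W rho H = rate W rho H 1%:M.
Proof. by rewrite /rate mulmx1. Qed.

Section FullCapacity.
Variable R : realType.
Local Notation C := R[i].
Local Notation Re := (@complex.Re R).
Variables (NR NT : nat) (W rho : R) (H : 'M[C]_(NR, NT)).
Hypotheses (W_gt0 : 0 < W) (rho_gt0 : 0 < rho).

Lemma rate_le_admissible_seq (Q : 'M[C]_NT) (s : R) : psd Q -> \tr Q = NT%:R ->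
  (forall k, rate W rho H (admissible_seq NT k) <= s) -> rate W rho H Q <= s.
Proof.
move=> /psdE psdQ trQ rate_le_s.
have [NT0|NT_gt0] := posnP NT.
  suff -> : Q = admissible_seq NT 0 by exact: rate_le_s.
  by apply/matrixP => i; have := ltn_ord i; rewrite {2}NT0.
(* Q = B B^*; normalising the Gram matrices of rational approximants of B gives members of
   [admissible_seq] that eventually converge to Q. *)
have [B QE] := psdmx_factor psdQ; have [M_ cvgB] := rat_cmx_approx B.
pose G x := oapp (fun k => rat_cmx (M_ k)) B x *m (oapp (fun k => rat_cmx (M_ k)) B x)^t*.
pose t x := Re (\tr (G x)); pose c x := NT%:R / t x.
have cvgG : matrixS cvg_opt G.
  by have := matrixS_mul cvg_opt_ring_closed cvgB (matrixS_ctr cvg_opt_ring_closed cvgB).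
have t_None : t None = NT%:R by rewrite /t /G /= -QE trQ -(rmorph_nat (real_complex R)).
have cvg_t : cvg_opt t by exact: (complexS_tr cvg_opt_ring_closed cvgG).1.
have cvg_c : cvg_opt c.
  by apply: cvgM; [exact: cvg_cst | apply: cvgV; rewrite // t_None pnatr_eq0 -lt0n].
pose Qx x := (c x)%:C%C *: G x.
have Qx_None : Qx None = Q.
  by rewrite /Qx /c t_None divff ?pnatr_eq0 -?lt0n // scale1r /G -QE.
have cvgQx : matrixS cvg_opt Qx.
  have cvg_cC : complexS cvg_opt (fun x => (c x)%:C%C) by split; [exact: cvg_c | exact: cvg_cst].
  by have := matrixS_scale cvg_opt_ring_closed cvg_cC cvgG.
have det_gt0 : 0 < Re (\det (1%:M + (rho / NT%:R)%:C%C *: (H *m Qx None *m ctrmx H))).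
  have /andP[det_ge1 _] := det_rate_bounds H rho_gt0 psdQ trQ.
  by rewrite Qx_None; exact: lt_le_trans ltr01 det_ge1.
have cvg_rate := cvg_opt_rate (W := W) cvgQx det_gt0.
have t_gt0 : \forall k \near \oo, 0 < t (Some k).
  by apply: (cvgr_gt _ cvg_t); rewrite t_None ltr0n.
rewrite -Qx_None -(cvg_lim _ cvg_rate) //; apply: limr_le; first exact: cvgP cvg_rate.
apply: filterS t_gt0 => k tk_gt0.
suff -> : Qx (Some k) = admissible_seq NT (pickle (M_ k)) by exact: rate_le_s.
by rewrite /admissible_seq pickleK /trace_normalize -/(G (Some k)) -/(t (Some k)) tk_gt0.
Qed.

Let lam := lambda_max (H *m ctrmx H).
Let admissible := [set Q : 'M[C]_NT | psd Q /\ \tr Q = NT%:R].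

Let rates_admissible_neq0 : [set rate W rho H Q | Q in admissible] !=set0.
Proof. by exists (rate W rho H 1%:M), 1%:M => //; exact: admissible1. Qed.

Lemma rate_admissible_le_capacity_bound :
  ubound [set rate W rho H Q | Q in admissible] (capacity_bound NR W rho lam).
Proof. by move=> _ [Q [/psdE psdQ trQ] <-]; exact: rate_le_capacity_bound. Qed.

Lemma admissible_seq_rate_bounded :
  ubound (range (fun k => rate W rho H (admissible_seq NT k))) (capacity_bound NR W rho lam).
Proof.
move=> _ [k _ <-]; apply: rate_admissible_le_capacity_bound.
by exists (admissible_seq NT k) => //; exact: admissible_seqP.
Qed.

Lemma cap_full_le_capacity_bound : cap_full W rho H <= capacity_bound NR W rho lam.
Proof.
exact: ge_sup rates_admissible_neq0 rate_admissible_le_capacity_bound.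
Qed.

Lemma cap_full_sups : cap_full W rho H = sups (fun k => rate W rho H (admissible_seq NT k)) 0.
Proof.
set u := fun k => _; have u_ub : has_ubound (sdrop u 0).
  by exists (capacity_bound NR W rho lam) => _ [k _ <-]; apply: admissible_seq_rate_bounded.
apply/eqP; rewrite eq_le; apply/andP; split.
  apply: ge_sup rates_admissible_neq0 _ => _ [Q [psdQ trQ] <-].
  apply: rate_le_admissible_seq => // k.
  by apply: (ub_le_sup u_ub); exists k.
apply: ge_sup; first by exists (u 0%N), 0%N.
move=> _ [k _ <-]; apply: ub_le_sup.
  by exists (capacity_bound NR W rho lam); exact: rate_admissible_le_capacity_bound.
by exists (admissible_seq NT k) => //; exact: admissible_seqP.
Qed.

Lemma cap_rx_le_capacity_bound : cap_rx W rho H <= capacity_bound NR W rho lam.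
Proof.
by rewrite cap_rxE; apply: rate_le_capacity_bound => //; [exact: psdmx1 | exact: mxtrace1].
Qed.
End FullCapacity.

Section LightTail.
Variables (R : realType) (d : measure_display) (T : measurableType d).

(* Unlike [ge0_le_integral], no measurability is needed: both sides are suprema of integrals
   of simple functions below the integrand. *)
Lemma ge0_le_integralT (mu : {measure set T -> \bar R}) (f g : T -> \bar R) :
  (forall x, (0 <= f x)%E) -> (forall x, (f x <= g x)%E) ->
  (\int[mu]_x f x <= \int[mu]_x g x)%E.
Proof.
move=> f0 fg; have g0 x : (0 <= g x)%E by apply: le_trans (f0 x) (fg x).
rewrite !ge0_integralTE //; apply: ereal_sup_le => _ [h hf <-].
by exists h => //= x; apply: le_trans (hf x) (fg x).
Qed.

Lemma markov_ge0 (mu : {measure set T -> \bar R}) (A : set T) (t : R) (g : T -> \bar R) :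
  measurable A -> 0 <= t -> (forall w, (0 <= g w)%E) -> (forall w, A w -> (t%:E <= g w)%E) ->
  (t%:E * mu A <= \int[mu]_w g w)%E.
Proof.
move=> mA t0 g0 tg; rewrite -[A]setIT -integral_indic // -integralZl_indic //; last first.
  by move=> /(le_lt_trans t0); rewrite ltxx.
apply: ge0_le_integralT => w; first by rewrite lee_fin mulr_ge0 ?indic_ge0.
by rewrite indicE; case: (boolP (w \in A)) => [/set_mem/tg|_]; rewrite ?mulr1 ?mulr0.
Qed.

Lemma light_tailed_log_bound (P : probability T R) (X lam : T -> R) (a b th : R) :
  measurable_fun setT X -> 0 <= b -> 0 < th -> (forall w, 0 <= lam w) ->
  (forall w, X w <= a + b * ln (1 + lam w)) ->
  (\int[P]_w ((1 + lam w) `^ th)%:E < +oo)%E -> light_tailed P X.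
Proof.
move=> mX b0 th0 lam0 X_le int_fin; split => //.
pose th' := th / (b + 1); have th'0 : 0 < th' by rewrite divr_gt0 // ltr_wpDl.
have pow_ge0 w : (0 <= ((1 + lam w) `^ th)%:E)%E by rewrite lee_fin powR_ge0.
pose J := fine (\int[P]_w ((1 + lam w) `^ th)%:E).
have JE : (\int[P]_w ((1 + lam w) `^ th)%:E)%E = J%:E.
  by rewrite fineK // ge0_fin_numE // integral_ge0.
exists th'; split => //; exists (J * expR (th' * a)), 0 => x _.
have mA : measurable [set w | x < X w].
  have := mX measurableT _ (measurable_itv `]x, +oo[); rewrite setTI.
  by congr measurable; apply/seteqP; split => w /=; rewrite in_itv /= andbT.
pose t := expR (th' * (x - a)); have t_gt0 : 0 < t by exact: expR_gt0.
have t_le w : x < X w -> (t%:E <= ((1 + lam w) `^ th)%:E)%E.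
  move=> xX; have lam1_gt0 : 0 < 1 + lam w by rewrite ltr_pwDl.
  have ln_ge0 : 0 <= ln (1 + lam w) by rewrite ln_ge0 // lerDl.
  have xa_le : x - a <= (b + 1) * ln (1 + lam w) by have := X_le w; nra.
  rewrite lee_fin -[_ `^ th]lnK ?posrE ?powR_gt0 // ln_powR ler_expR /th' mulrAC.
  by rewrite ler_pdivrMr ?ltr_wpDl // -mulrA ler_wpM2l ?(ltW th0) // mulrC.
have := markov_ge0 P mA (ltW t_gt0) pow_ge0 t_le; rewrite JE.
rewrite -lee_pdivlMl // => /le_trans; apply; rewrite lee_fin.
by rewrite -mulrA -expRD /t -expRN mulrC mulrBr opprB addrC.
Qed.
End LightTail.

Theorem theorem1 (R : realType) (d : measure_display) (T : measurableType d)
  (P : probability T R) (NR NT : nat) (H : T -> 'M[complex R]_(NR, NT))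
  (W rho : R) :
  (forall i j, measurable_fun setT (fun w => complex.Re (H w i j))) ->
  (forall i j, measurable_fun setT (fun w => complex.Im (H w i j))) ->
  0 < W -> 0 < rho ->
  (exists theta : R, 0 < theta /\
     (\int[P]_w ((1 + lambda_max (H w *m ctrmx (H w))) `^ theta)%:E < +oo)%E) ->
  light_tailed P (fun w => cap_full W rho (H w)) /\
  light_tailed P (fun w => cap_rx W rho (H w)).
Proof.
move=> mRe mIm W_gt0 rho_gt0 [th [th_gt0 int_fin]].
have mH : matrixS (measurable_fun setT) H by move=> i j; split.
have lam0 w := lambda_max_gram_ge0 (H w).
have b0 : 0 <= W * NR%:R / ln 2 by rewrite divr_ge0 ?mulr_ge0 ?ler0n ?ltW // ln_gt0 // ltr1n.
have tail := light_tailed_log_bound (P := P) (a := W * NR%:R / ln 2 * ln (1 + rho * NR%:R))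
  _ b0 th_gt0 lam0.
split; apply: tail int_fin => [|w]; rewrite -?mulrDr.
- rewrite (funext (fun w => cap_full_sups (H w) W_gt0 rho_gt0)).
  apply: measurable_fun_sups => [w _|k]; last exact: measurable_rate.
  by eexists; exact: admissible_seq_rate_bounded.
- exact: cap_full_le_capacity_bound.
- by rewrite (funext (fun w => cap_rxE W rho (H w))); exact: measurable_rate.
- exact: cap_rx_le_capacity_bound.
Qed.
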